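(* In the setting described in the context, let $\emptyset\subsetneq\mathcal A\subsetneq\mathcal C^*$ and $\mathcal S=\bigcup_{v\in\mathcal A}\mathcal U_v$. Suppose $y'_{\mathcal S}\ge\lfloor y_{\mathcal S}\rfloor$ and $x_{\mathcal S,\mathcal J}\le f(|\mathcal J|,y_{\mathcal S})$ for every $\mathcal J\subseteq\mathcal C$. Then $$\big(y'_{\mathcal S}-\lfloor y'_{\mathcal S}\rfloor\big)\big(\lceil y_{\mathcal S}\rceil-y_{\mathcal S}\big)\,d(\mathcal A,\mathcal C^*\setminus\mathcal A)\ \le\ \frac4u D_{\mathcal S}+\frac{4\ell+2}{u}D'_{\mathcal S}.$$
   Context: Setting: finite sets $\mathcal F$ (facility locations) and $\mathcal C$ (clients), a metric $d$ on $\mathcal F\cup\mathcal C$, positive integers $k,u,\ell$, and reals $x_{i,j}\ge0$, $y_i\ge0$ with $\sum_{i\in\mathcal F}x_{i,j}=1$ for all $j$, $\sum_iy_i\le k$, $x_{i,j}\le y_i$, $\sum_jx_{i,j}\le uy_i$. Notation: $y_{\mathcal B}=\sum_{i\in\mathcal B}y_i$, $x_{\mathcal B,j}=\sum_{i\in\mathcal B}x_{i,j}$, $x_{\mathcal B,\mathcal J}=\sum_{i\in\mathcal B,j\in\mathcal J}x_{i,j}$, $y'_{\mathcal B}=\frac1u\sum_{j\in\mathcal C}x_{\mathcal B,j}$; $d(\mathcal X,\mathcal Y)=\min_{a\in\mathcal X,b\in\mathcal Y}d(a,b)$; $d_{av}(j)=\sum_ix_{i,j}d(i,j)$; $D_i=\sum_jx_{i,j}d(i,j)$,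 $D'_i=\sum_jx_{i,j}d_{av}(j)$, $D_{\mathcal B}=\sum_{i\in\mathcal B}D_i$, $D'_{\mathcal B}=\sum_{i\in\mathcal B}D'_i$. The function $f:\mathbb Z_{\ge0}\times\mathbb R_{\ge0}\to\mathbb R$ is $f(p,q)=qu$ if $q\le\lfloor p/u\rfloor$; $u\lfloor p/u\rfloor+u(p/u-\lfloor p/u\rfloor)(q-\lfloor p/u\rfloor)$ if $\lfloor p/u\rfloor<q<\lceil p/u\rceil$; $p$ if $q\ge\lceil p/u\rceil$. Construction of $\mathcal C^*\subseteq\mathcal C$: start with $\mathcal C^*=\emptyset$, $R=\mathcal C$; while $R\ne\emptyset$, choose $v\in R$ with smallest $d_{av}(v)$, add it to $\mathcal C^*$, and remove from $R$ all $j\in R$ with $d(j,v)\le2\ell d_{av}(j)$. Each $i\in\mathcal F$ is put into $\mathcal U_v$ for one $v\in\mathcal C^*$ closest to $i$ (ties arbitrary). *)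

From mathcomp Require Import all_boot all_order all_algebra.
Set Implicit Arguments. Unset Strict Implicit. Unset Printing Implicit Defensive.
Import Order.TTheory GRing.Theory Num.Theory.
Local Open Scope ring_scope.

Section Defs.
Variables (R : archiRealFieldType) (Fac Cli : finType).

Definition is_metric (d : Fac + Cli -> Fac + Cli -> R) : Prop :=
  [/\ forall a b, 0 <= d a b,
      forall a b, d a b = 0 <-> a = b,
      forall a b, d a b = d b a &
      forall a b c, d a c <= d a b + d b c].

Definition flR (r : R) : R := (Num.floor r)%:~R.
Definition ceR (r : R) : R := (Num.ceil r)%:~R.

Definition fcap (u : nat) (p : nat) (q : R) : R :=
  let pu := p%:R / u%:R in
  if q <= flR pu then q * u%:R
  else if q < ceR pu then
    u%:R * flR pu + u%:R * (pu - flR pu) * (q - flR pu)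
  else p%:R.

Variables (d : Fac + Cli -> Fac + Cli -> R) (x : Fac -> Cli -> R) (y : Fac -> R).

Definition dFC (i : Fac) (j : Cli) : R := d (inl i) (inr j).
Definition dCC (j j' : Cli) : R := d (inr j) (inr j').

Definition dav (j : Cli) : R := \sum_(i : Fac) x i j * dFC i j.
Definition Dfac (i : Fac) : R := \sum_(j : Cli) x i j * dFC i j.
Definition D'fac (i : Fac) : R := \sum_(j : Cli) x i j * dav j.

Definition ysum (B : {set Fac}) : R := \sum_(i in B) y i.
Definition y'sum (u : nat) (B : {set Fac}) : R :=
  (u%:R)^-1 * \sum_(j : Cli) \sum_(i in B) x i j.
Definition xsum (B : {set Fac}) (J : {set Cli}) : R :=
  \sum_(i in B) \sum_(j in J) x i j.
Definition Dsum (B : {set Fac}) : R := \sum_(i in B) Dfac i.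
Definition D'sum (B : {set Fac}) : R := \sum_(i in B) D'fac i.

(* d(X,Y) = min over a in X, b in Y of d(a,b), for client sets; the default
   of the min is the max of all the values (0 if empty), so the result is the
   true minimum whenever the index set is nonempty. *)
Definition setdistCC (X Y : {set Cli}) : R :=
  \big[Num.min/ \big[Num.max/0]_(p : Cli * Cli | (p.1 \in X) && (p.2 \in Y)) dCC p.1 p.2]_
     (p : Cli * Cli | (p.1 \in X) && (p.2 \in Y)) dCC p.1 p.2.

(* The greedy construction of C*: clients still remaining after choosing the
   sequence s (a client j is removed when some chosen v has d(j,v) <= 2 l dav j). *)
Definition remaining (l : nat) (s : seq Cli) : {set Cli} :=
  [set j | all (fun v => 2%:R * l%:R * dav j < dCC j v) s].

Definition greedy_run (l : nat) (s : seq Cli) : Prop :=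
  (forall k, (k < size s)%N ->
     forall v0 : Cli, let v := nth v0 s k in
     v \in remaining l (take k s) /\
     (forall j, j \in remaining l (take k s) -> dav v <= dav j))
  /\ remaining l s = set0.

Definition closest_assignment (Cstar : {set Cli}) (sigma : Fac -> Cli) : Prop :=
  forall i, sigma i \in Cstar /\ (forall v, v \in Cstar -> dFC i (sigma i) <= dFC i v).

Definition Uset (sigma : Fac -> Cli) (v : Cli) : {set Fac} := [set i | sigma i == v].

End Defs.

From mathcomp Require Import all_boot all_order all_algebra.
From mathcomp Require Import ring lra.
Set Implicit Arguments.
Unset Strict Implicit.
Unset Printing Implicit Defensive.
Import Order.TTheory GRing.Theory Num.Theory.
Local Open Scope ring_scope.

(* Write a_j = x_{S,j} and θ = y_S - ⌊y_S⌋.  Every client j lies within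
   2ℓ·d_av(j) of some v ∈ C*, and the cluster centre σ(i) of every facility i is
   within 2d(i,j) + 4ℓ·d_av(j) of v.  Since S is a union of clusters, whichever
   side of the cut (A, C*∖A) v lies on, the fraction of j served across the cut
   pays for d(A, C*∖A):  d(A, C*∖A) · Σ_j a_j(1 - a_j) ≤ 2 D_S + (4ℓ+2) D'_S.
   The capacity bound for J = {j | a_j > θ}, read off the chord of f through
   ⌊y_S⌋ and ⌊y_S⌋ + 1, gives Σ_j a_j² ≤ θ·u y'_S + u⌊y_S⌋(1 - θ), hence
   Σ_j a_j(1 - a_j) ≥ u(1 - θ)(y'_S - ⌊y_S⌋), which dominates the product of
   fractional parts in the statement. *)

Section Rounding.
Variable R : archiRealFieldType.
Implicit Types Y z : R.

Lemma flR_le Y : flR Y <= Y.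
Proof. exact: floor_le. Qed.

Lemma lt_flRD1 Y : Y < flR Y + 1.
Proof. by have := floorD1_gt Y; rewrite intrD. Qed.

Lemma ceR_ge Y : Y <= ceR Y.
Proof. exact: ceil_ge. Qed.

Lemma ceR_le_flRD1 Y : ceR Y <= flR Y + 1.
Proof. by rewrite /ceR /flR -[1]/(intr 1) -intrD ler_int ceil_floor lerD2l lez_nat leq_b1. Qed.

Lemma frac_gap_le z Y : flR Y <= z ->
  (z - flR z) * (ceR Y - Y) <= (z - flR Y) * (flR Y + 1 - Y).
Proof.
move=> Yz; have flYz : flR Y <= flR z by rewrite /flR ler_int floor_ge_int.
have := flR_le z; have := flR_le Y; have := ceR_ge Y; have := ceR_le_flRD1 Y.
move=> *; apply: ler_pM; lra.
Qed.

Lemma fcap_le_interp (u p : nat) Y : (0 < u)%N ->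
  fcap u p Y <= flR Y * u%:R + (p%:R - flR Y * u%:R) * (Y - flR Y).
Proof.
move=> u_gt0; have uR : 0 < u%:R :> R by rewrite ltr0n.
pose pu : R := p%:R / u%:R.
have p_pu : p%:R = pu * u%:R by rewrite divfK ?gt_eqF.
have := flR_le Y; have := lt_flRD1 Y; rewrite /fcap -/pu p_pu => Y_lt Y_ge.
case: ifP => [Y_le|Y_gt].
  have : Num.floor Y <= Num.floor pu.
    by rewrite floor_ge_int (le_trans Y_ge) // (le_trans Y_le) ?floor_le.
  rewrite le_eqVlt => /orP[/eqP fl_eq|fl_lt].
    have {}Y_le : Y <= flR Y by rewrite /flR fl_eq.
    have -> : Y - flR Y = 0 by lra.
    rewrite mulr0 addr0 ler_pM2r //; lra.
  move: fl_lt; rewrite -lezD1 -(ler_int R) intrD -/(flR Y) => fl_lt.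
  have := flR_le pu => pu_ge.
  have p_ge : (flR Y + 1) * u%:R <= pu * u%:R by rewrite ler_pM2r //; lra.
  nra.
case: ifP => [Y_lt_ce|Y_ge_ce]; last first.
  have : Num.ceil pu <= Num.floor Y by rewrite floor_ge_int leNgt Y_ge_ce.
  rewrite -(ler_int R) -/(flR Y) -/(ceR pu) => ce_le.
  have := ceR_ge pu => pu_le.
  have p_le : pu * u%:R <= flR Y * u%:R by rewrite ler_pM2r //; lra.
  nra.
suff -> : flR pu = flR Y by rewrite le_eqVlt; apply/orP; left; apply/eqP; ring.
rewrite /flR; congr intr; apply/eqP; rewrite eq_le floor_ge_int ltW ?ltNge ?Y_gt //=.
by rewrite -ltzD1 floor_lt_int intrD (lt_le_trans Y_lt_ce) ?ceR_le_flRD1.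
Qed.

Lemma rounding_gap_bound (u z Y Q D B : R) :
  0 < u -> 0 <= D -> flR Y <= z ->
  Q <= (Y - flR Y) * (u * z) + flR Y * u * (1 - (Y - flR Y)) ->
  D * (u * z - Q) <= B ->
  (z - flR z) * (ceR Y - Y) * D <= B / u.
Proof.
move=> u_gt0 D_ge0 Yz Q_le DQ_le; rewrite ler_pdivlMr //.
have := ler_wpM2l (ltW u_gt0) (frac_gap_le Yz); have := lt_flRD1 Y => Y_lt gap.
have gap_le : u * ((z - flR z) * (ceR Y - Y)) <= u * z - Q by nra.
apply: le_trans DQ_le; rewrite mulrAC mulrC ler_wpM2l //; lra.
Qed.

End Rounding.

Lemma ler_const_wsum (R : numDomainType) (I : finType) (P : pred I)
    (w f : I -> R) (c : R) :
  (forall i, P i -> 0 <= w i) -> (forall i, P i -> c <= f i) ->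
  c * \sum_(i | P i) w i <= \sum_(i | P i) w i * f i.
Proof.
move=> w_ge0 c_le; rewrite mulr_sumr; apply: ler_sum => i Pi.
by rewrite mulrC ler_wpM2l ?w_ge0 ?c_le.
Qed.

Lemma sum_sqr_le_threshold (R : realFieldType) (I : finType) (a : I -> R) (t c : R) :
  (forall j, 0 <= a j <= 1) ->
  \sum_(j in [set j | t < a j]) a j <= t * #|[set j | t < a j]|%:R + c ->
  \sum_j a j ^+ 2 <= t * \sum_j a j + c.
Proof.
set J := [set j | t < a j] => a01 sumJ.
have sqr_le j : a j ^+ 2 <= t * a j + (if j \in J then a j - t else 0).
  have /andP[a0 a1] := a01 j; rewrite expr2 inE; case: ifP => [t_lt|/negbT].
    nra.
  rewrite -leNgt addr0; nra.
apply: (le_trans (ler_sum _ (fun j _ => sqr_le j))).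
rewrite big_split /= -mulr_sumr -big_mkcond sumrB sumr_const -mulr_natr.
lra.
Qed.

Lemma setdistCC_ge0 (R : archiRealFieldType) (Fac Cli : finType)
    (d : Fac + Cli -> Fac + Cli -> R) (X Y : {set Cli}) :
  (forall a b, 0 <= d a b) -> 0 <= setdistCC d X Y.
Proof.
move=> d_ge0; have dCC_ge0 p : 0 <= dCC d p.1 p.2 by apply: d_ge0.
apply: (big_ind (fun z => 0 <= z)) => // [|z1 z2]; last by rewrite le_min => ->.
by apply: (big_ind (fun z => 0 <= z)) => // z1 z2; rewrite le_max => ->.
Qed.

Lemma setdistCC_le (R : archiRealFieldType) (Fac Cli : finType)
    (d : Fac + Cli -> Fac + Cli -> R) (X Y : {set Cli}) v w :
  v \in X -> w \in Y -> setdistCC d X Y <= dCC d v w.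
Proof. by move=> vX wY; apply: (bigmin_le_cond _ (j := (v, w))); rewrite /= vX wY. Qed.

Section Clustering.
Variables (R : archiRealFieldType) (Fac Cli : finType).
Variables (d : Fac + Cli -> Fac + Cli -> R) (x : Fac -> Cli -> R).
Hypothesis d_metric : is_metric d.
Hypothesis x_ge0 : forall i j, 0 <= x i j.
Hypothesis x_sum1 : forall j, \sum_i x i j = 1.

Definition xS (S : {set Fac}) (j : Cli) : R := \sum_(i in S) x i j.

Lemma d_ge0 a b : 0 <= d a b.
Proof. by case: d_metric. Qed.

Lemma xd_ge0 i j : 0 <= x i j * dFC d i j.
Proof. by rewrite mulr_ge0 ?d_ge0. Qed.

Lemma xS_ge0 (S : {set Fac}) j : 0 <= xS S j.
Proof. exact: sumr_ge0. Qed.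

Lemma subr1_xS (S : {set Fac}) j : 1 - xS S j = xS (~: S) j.
Proof.
rewrite -(x_sum1 j) (bigID (mem S)) /= addrC addrK.
by apply: eq_bigl => i; rewrite inE.
Qed.

Lemma xS_le1 (S : {set Fac}) j : xS S j <= 1.
Proof. by rewrite -subr_ge0 subr1_xS xS_ge0. Qed.

Lemma sum_xd_le_dav (S : {set Fac}) j :
  \sum_(i in S) x i j * dFC d i j <= dav d x j.
Proof.
rewrite /dav [X in _ <= X](bigID (mem S)) /= lerDl.
by apply: sumr_ge0 => i _; apply: xd_ge0.
Qed.

Lemma sum_xS (u : nat) (S : {set Fac}) : (0 < u)%N -> \sum_j xS S j = u%:R * y'sum x u S.
Proof. by move=> u_gt0; rewrite /y'sum mulrA mulfV ?mul1r // pnatr_eq0 -lt0n. Qed.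

Lemma Dsum_ge0 (S : {set Fac}) : 0 <= Dsum d x S.
Proof. by apply: sumr_ge0 => i _; apply: sumr_ge0 => j _; apply: xd_ge0. Qed.

Lemma sum_xS_dFC (S : {set Fac}) : \sum_j \sum_(i in S) x i j * dFC d i j = Dsum d x S.
Proof. by rewrite exchange_big. Qed.

Lemma sum_xS_dav (S : {set Fac}) : \sum_j xS S j * dav d x j = D'sum d x S.
Proof.
rewrite /D'sum /D'fac exchange_big; apply: eq_bigr => j _.
by rewrite /xS mulr_suml.
Qed.

Lemma xsum_xS (S : {set Fac}) (J : {set Cli}) : xsum x S J = \sum_(j in J) xS S j.
Proof. exact: exchange_big. Qed.

Lemma mem_bigcup_Uset (A : {set Cli}) (sigma : Fac -> Cli) i :
  (i \in \bigcup_(v in A) Uset sigma v) = (sigma i \in A).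
Proof.
apply/bigcupP/idP => [[v vA]|siA]; first by rewrite inE => /eqP ->.
by exists (sigma i); rewrite ?inE.
Qed.

Lemma greedy_covers l s : greedy_run d x l s ->
  forall j, exists2 v, v \in s & dCC d j v <= 2 * l%:R * dav d x j.
Proof.
move=> [_ rem0] j; have : j \notin remaining d x l s by rewrite rem0 inE.
by rewrite inE => /allPn[v vs]; rewrite -leNgt; exists v.
Qed.

Lemma closest_dCC_le i j (Cstar : {set Cli}) sigma v :
  closest_assignment d Cstar sigma -> v \in Cstar ->
  dCC d (sigma i) v <= 2 * dFC d i j + 2 * dCC d j v.
Proof.
move=> closest vC; have [_ sigma_min] := closest i.
have [_ _ d_sym d_tri] := d_metric.
have := sigma_min v vC; have := d_tri (inr (sigma i)) (inl i) (inr v).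
have := d_tri (inl i) (inr j) (inr v).
rewrite /dCC /dFC [d (inr _) (inl i)]d_sym; lra.
Qed.

Section Cluster.
Variables (l : nat) (Cstar A : {set Cli}) (sigma : Fac -> Cli) (S : {set Fac}) (D : R).
Hypothesis sigma_closest : closest_assignment d Cstar sigma.
Hypothesis S_sigma : forall i, (i \in S) = (sigma i \in A).
Hypothesis D_sep : forall v w, v \in A -> w \in Cstar :\: A -> D <= dCC d v w.

Lemma client_bound j v : v \in Cstar -> dCC d j v <= 2 * l%:R * dav d x j ->
  D * (xS S j * (1 - xS S j))
  <= 2 * \sum_(i in S) x i j * dFC d i j + (4 * l + 2)%:R * (xS S j * dav d x j).
Proof.
move=> vC jv; set a := xS S j.
have a_ge0 : 0 <= a := xS_ge0 S j; have a_le1 : a <= 1 := xS_le1 S j.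
have dav0 : 0 <= dav d x j by apply: sumr_ge0 => i _; apply: xd_ge0.
have near_v i : D <= dCC d (sigma i) v -> D <= 2 * dFC d i j + 4 * l%:R * dav d x j.
  by move=> Dv; have := closest_dCC_le i j sigma_closest vC; lra.
have wsum (B : {set Fac}) : (forall i, i \in B -> D <= dCC d (sigma i) v) ->
    D * xS B j <= 2 * \sum_(i in B) x i j * dFC d i j + 4 * l%:R * dav d x j * xS B j.
  move=> Bv; apply: le_trans (ler_const_wsum (P := mem B) (fun i _ => x_ge0 i j)
                                 (fun i Bi => near_v i (Bv i Bi))) _.
  by rewrite mulr_sumr [X in _ + X]mulr_sumr -big_split; apply: ler_sum => i _ /=; lra.
have S_xd_ge0 : 0 <= \sum_(i in S) x i j * dFC d i j.
  by apply: sumr_ge0 => i _; apply: xd_ge0.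
have [_ _ d_sym _] := d_metric.
have ldav0 : 0 <= l%:R * dav d x j by rewrite mulr_ge0.
rewrite natrD natrM; case: (boolP (v \in A)) => vA.
  have Sc_bound : D * (1 - a)
      <= 2 * \sum_(i in ~: S) x i j * dFC d i j + 4 * l%:R * dav d x j * (1 - a).
    rewrite subr1_xS; apply: wsum => i; rewrite inE S_sigma => siA.
    rewrite /dCC d_sym; apply: D_sep vA _.
    by rewrite inE siA (sigma_closest i).1.
  have := ler_wpM2l a_ge0 Sc_bound; have := sum_xd_le_dav (~: S) j; nra.
have S_bound : D * a <= 2 * \sum_(i in S) x i j * dFC d i j + 4 * l%:R * dav d x j * a.
  by apply: wsum => i; rewrite S_sigma => siA; apply: D_sep siA _; rewrite inE vA.
have a_compl_ge0 : 0 <= 1 - a by rewrite subr_ge0.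
have := ler_wpM2l a_compl_ge0 S_bound; nra.
Qed.

Lemma cluster_bound :
  (forall j, exists2 v, v \in Cstar & dCC d j v <= 2 * l%:R * dav d x j) ->
  D * (\sum_j xS S j - \sum_j xS S j ^+ 2)
  <= 2 * Dsum d x S + (4 * l + 2)%:R * D'sum d x S.
Proof.
move=> cover; rewrite -sum_xS_dFC -sum_xS_dav -sumrB !mulr_sumr -big_split.
apply: ler_sum => j _ /=; have [v vC jv] := cover j.
have -> : xS S j - xS S j ^+ 2 = xS S j * (1 - xS S j) by ring.
exact: client_bound vC jv.
Qed.

End Cluster.

End Clustering.

Theorem lemma2 (R : archiRealFieldType) (Fac Cli : finType)
  (d : Fac + Cli -> Fac + Cli -> R) (x : Fac -> Cli -> R) (y : Fac -> R)
  (k u l : nat) :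
  is_metric d ->
  (0 < k)%N -> (0 < u)%N -> (0 < l)%N ->
  (forall i j, 0 <= x i j) -> (forall i, 0 <= y i) ->
  (forall j, \sum_(i : Fac) x i j = 1) ->
  \sum_(i : Fac) y i <= k%:R ->
  (forall i j, x i j <= y i) ->
  (forall i, \sum_(j : Cli) x i j <= u%:R * y i) ->
  forall (s : seq Cli) (sigma : Fac -> Cli) (A : {set Cli}),
  greedy_run d x l s ->
  let Cstar := [set v | v \in s] in
  closest_assignment d Cstar sigma ->
  A != set0 -> A \proper Cstar ->
  let S := \bigcup_(v in A) Uset sigma v in
  y'sum x u S >= flR (ysum y S) ->
  (forall J : {set Cli}, xsum x S J <= fcap u #|J| (ysum y S)) ->
  (y'sum x u S - flR (y'sum x u S)) * (ceR (ysum y S) - ysum y S)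
    * setdistCC d A (Cstar :\: A)
  <= 4%:R / u%:R * Dsum d x S + (4 * l + 2)%:R / u%:R * D'sum d x S.
Proof.
move=> d_metric _ u_gt0 _ x_ge0 _ x_sum1 _ _ _ s sigma A greedy Cstar closest _ _ S
  y'_ge cap.
set Y := ysum y S; set t := Y - flR Y.
have sqr_le : \sum_j xS x S j ^+ 2 <= t * (u%:R * y'sum x u S) + flR Y * u%:R * (1 - t).
  rewrite -(sum_xS _ _ u_gt0); apply: sum_sqr_le_threshold => [j|].
    by rewrite xS_ge0 ?xS_le1.
  set J := [set j | _]; rewrite -xsum_xS.
  have := cap J; have := fcap_le_interp #|J| Y u_gt0; rewrite -/t; lra.
have D_sep v w := @setdistCC_le R Fac Cli d A (Cstar :\: A) v w.
have cover j : exists2 v, v \in Cstar & dCC d j v <= 2 * l%:R * dav d x j.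
  by have [v vs jv] := greedy_covers greedy j; exists v; rewrite ?inE.
have := cluster_bound d_metric x_ge0 x_sum1 closest (mem_bigcup_Uset A sigma) D_sep cover.
rewrite -/S (sum_xS _ _ u_gt0) => cluster.
have uR : 0 < u%:R :> R by rewrite ltr0n.
have D_ge0 := setdistCC_ge0 A (Cstar :\: A) (d_ge0 d_metric).
apply: le_trans (rounding_gap_bound uR D_ge0 y'_ge sqr_le cluster) _.
rewrite mulrAC [_ / _ * D'sum _ _ _]mulrAC -mulrDl ler_pM2r ?invr_gt0 //.
have := Dsum_ge0 d_metric x_ge0 S; lra.
Qed.
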